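(* As formal power series in variables $p_1,p_2,\dots$, $$\sum_{\ell(\mu)\ge2}\frac{(|\mu|+\ell(\mu)-3)!\,(\ell(\mu)-1)\,p_\mu}{(|\mu|-1)!\,z_\mu}=\frac12\left(\sum_{\mu\ne\emptyset}\frac{(|\mu|+\ell(\mu)-2)!\,p_\mu}{(|\mu|-1)!\,z_\mu}\right)^2,$$ where the sums are over partitions $\mu$.
   Context: A partition is $\mu=(\mu_1\ge\cdots\ge\mu_k>0)$ with $|\mu|=\sum\mu_i$ and $\ell(\mu)=k$. $m_j(\mu)$ is the number of parts equal to $j$, $z_\mu=\prod_jm_j(\mu)!\,j^{m_j(\mu)}$, and $p_\mu=\prod_jp_j^{m_j(\mu)}$. *)

(* The monomials p_mu are indexed by partitions mu (a weakly decreasing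
   sequence of positive integers); a formal power series is represented by its
   coefficient function on monomials. *)
From mathcomp Require Import all_boot all_order all_algebra.
Set Implicit Arguments. Unset Strict Implicit. Unset Printing Implicit Defensive.
Import GRing.Theory Num.Theory.
Local Open Scope ring_scope.

Definition is_partition (mu : seq nat) : bool :=
  sorted geq mu && all (fun x => (0 < x)%N) mu.

(* |mu| = sumn mu, l(mu) = size mu, m_j(mu) = count_mem j mu *)
Definition zee (mu : seq nat) : nat :=
  (\prod_(j <- undup mu) ((count_mem j mu)`! * j ^ (count_mem j mu)))%N.

Definition fps := seq nat -> rat.

(* all ways of writing the multiset mu as a union alpha (+) beta, each
   (ordered) decomposition listed exactly once *)
Definition splittings (mu : seq nat) : seq (seq nat * seq nat) :=
  undup [seq (mask (tval m) mu, mask (map negb (tval m)) mu)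
        | m <- enum {: (size mu).-tuple bool}].

(* product of formal power series: p_alpha * p_beta = p_(alpha u beta) *)
Definition fps_mul (F G : fps) : fps :=
  fun mu => \sum_(ab <- splittings mu) F ab.1 * G ab.2.

Definition lhs_series : fps := fun mu =>
  if (1 < size mu)%N then
    ((sumn mu + size mu - 3)`! * (size mu).-1)%:R / (((sumn mu).-1)`! * zee mu)%:R
  else 0.

Definition base_series : fps := fun mu =>
  if (0 < size mu)%N then
    ((sumn mu + size mu - 2)`!)%:R / (((sumn mu).-1)`! * zee mu)%:R
  else 0.

From mathcomp Require Import all_boot all_order all_algebra ring.
Set Implicit Arguments. Unset Strict Implicit. Unset Printing Implicit Defensive.
Import GRing.Theory Num.Theory.

(* Write y^(k) = y (y + 1) ... (y + k - 1).  For a partition mu with n = |mu| and l = l(mu),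
   the coefficient of p_mu is n^(l-1) / z_mu in the base series and (l - 1) n^(l-2) / z_mu on
   the left.  A splitting mu = alpha u beta comes from z_mu / (z_alpha z_beta) subsets S of
   the parts of mu, so z_mu times the coefficient of p_mu in the square is the sum over all S
   of g(S) g(S^c), where g(S) = x_S^(|S|-1), x_S is the sum of the parts in S and g is 0 on
   the empty set.  That this sum equals 2 (l - 1) n^(l-2) is an Abel-type identity: the
   polynomials A_S(a) = a (a + x_S + 1)^(|S|-1) satisfy the binomial-type convolution
   sum_(S <= V) A_S(a) A_(V\S)(b) = A_V(a + b), and the rooting g(S) = sum_(r in S) A_(S\r)(x_r)
   turns the sum of g(S) g(S^c) into the sum of A_(U\{r,r'})(x_r + x_r') over ordered pairs
   of distinct parts r, r'. *)

Fixpoint bitseqs n : seq bitseq :=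
  if n is n'.+1 then map (cons true) (bitseqs n') ++ map (cons false) (bitseqs n')
  else [:: [::]].

Lemma mem_bitseqs n m : (m \in bitseqs n) = (size m == n).
Proof.
elim: n m => [|n IHn] [|b m] //=; rewrite mem_cat.
  by apply/negbTE/negP => /orP[] /mapP[].
rewrite eqSS -IHn; case: b; apply/idP/idP => [/orP[] /mapP[m' m'_n] [] // -> //|m_n].
- by rewrite map_f.
- by rewrite map_f ?orbT.
Qed.

Lemma uniq_bitseqs n : uniq (bitseqs n).
Proof.
have cons_inj (b : bool) : injective (cons b) by move=> ? ? [].
elim: n => [|n IHn] //=; rewrite cat_uniq !(map_inj_uniq (cons_inj _)) IHn /= andbT.
by apply/hasPn => m /mapP[m' _ ->]; apply/negP => /mapP[? _ []].
Qed.

Lemma perm_bitseqs n : perm_eq (map val (enum {: n.-tuple bool})) (bitseqs n).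
Proof.
apply: uniq_perm; [by rewrite map_inj_uniq ?enum_uniq //; apply: val_inj|exact: uniq_bitseqs|].
move=> m; rewrite mem_bitseqs; apply/mapP/idP => [[t _ ->]|/eqP sz_m]; first by rewrite size_tuple.
by exists (Tuple (introT eqP sz_m)); rewrite ?mem_enum.
Qed.

Lemma count_mask_negb (T : Type) (P : pred T) (s : seq T) (m : bitseq) :
  size m = size s -> count P (mask m s) + count P (mask (map negb m) s) = count P s.
Proof.
elim: s m => [|y s IHs] [|b m] //= [sz_m].
by case: b => /=; rewrite -(IHs m sz_m) /=; ring.
Qed.

Lemma count_perm_mask_cons y (s t : seq nat) :
  count (fun m => perm_eq (mask m (y :: s)) t) (bitseqs (size s).+1) =
  (y \in t) * count (fun m => perm_eq (mask m s) (rem y t)) (bitseqs (size s)) +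
  count (fun m => perm_eq (mask m s) t) (bitseqs (size s)).
Proof.
rewrite /= count_cat !count_map; congr (_ + _); case yt: (y \in t).
  by rewrite mul1n; apply: eq_count => m /=; rewrite (permPr (perm_to_rem yt)) perm_cons.
rewrite mul0n; apply/eqP; rewrite -leqn0 leqNgt -has_count; apply/hasPn => m _ /=.
by apply/negP => /perm_mem/(_ y); rewrite inE eqxx yt.
Qed.

Lemma count_perm_mask B (s t : seq nat) :
  all (fun y => y < B) s -> all (fun y => y < B) t ->
  count (fun m => perm_eq (mask m s) t) (bitseqs (size s)) =
  \prod_(j < B) 'C(count_mem (j : nat) s, count_mem (j : nat) t).
Proof.
elim: s t => [|y s IHs] t.
  case: t => [_ _|z t _ /andP[ltzB _]]; first by rewrite big1 // => j _; rewrite bin0.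
  rewrite /= perm_sym; case: perm_nilP => // _.
  by rewrite (bigD1 (Ordinal ltzB)) //= eqxx bin0n.
move=> /andP[ltyB ltsB] lttB.
have ltrB : all (fun z => z < B) (rem y t) by apply/allP => z /mem_rem /(allP lttB).
rewrite count_perm_mask_cons !IHs //.
pose j0 := Ordinal ltyB.
have neq_y (j : 'I_B) : j != j0 -> (y == j) = false by rewrite eq_sym -val_eqE => /negPf.
rewrite [X in _ * X](bigD1 j0) // [X in _ + X](bigD1 j0) // [RHS](bigD1 j0) //= eqxx add1n.
have restE u : {in predC1 y, forall j, count_mem j u = count_mem j t} ->
    \prod_(j < B | j != j0) 'C(count_mem (j : nat) s, count_mem (j : nat) u) =
    \prod_(j < B | j != j0) 'C((y == j) + count_mem (j : nat) s, count_mem (j : nat) t).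
  by move=> ut; apply: eq_bigr => j /neq_y yj; rewrite yj ut // inE eq_sym yj.
case yt: (y \in t); last first.
  have -> : count_mem y t = 0 by apply/count_memPn; rewrite yt.
  by rewrite !bin0 mul0n add0n restE.
have remE j : count_mem j t = (y == j) + count_mem j (rem y t).
  by rewrite (permP (perm_to_rem yt)).
have remC : {in predC1 y, forall j, count_mem j (rem y t) = count_mem j t}.
  by move=> j; rewrite inE remE eq_sym => /negPf->.
by rewrite [count_mem y t]remE eqxx add1n binS mulnDl addnC mul1n (restE _ remC) restE.
Qed.

Lemma zee_prod B s : all (fun y => y < B) s ->
  zee s = \prod_(j < B) ((count_mem (j : nat) s)`! * j ^ (count_mem (j : nat) s)).
Proof.
move=> ltsB; pose F j := (count_mem j s)`! * j ^ (count_mem j s).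
rewrite -(big_mkord xpredT F) /index_iota subn0.
rewrite (eq_bigr (fun j => if j \in s then F j else 1)) => [|j _]; last first.
  by case: ifP => // /negbT js; rewrite /F (count_memPn js).
rewrite -big_mkcond -big_filter /zee; apply: perm_big.
apply: uniq_perm; [exact: undup_uniq|by rewrite filter_uniq // iota_uniq|].
move=> j; rewrite mem_undup mem_filter mem_iota add0n /=.
by case js: (j \in s); rewrite ?(allP ltsB j js).
Qed.

Lemma zee_mask_split B (mu : seq nat) (m : bitseq) :
  all (fun y => y < B) mu -> size m = size mu ->
  \prod_(j < B) 'C(count_mem (j : nat) mu, count_mem (j : nat) (mask m mu)) *
    zee (mask m mu) * zee (mask (map negb m) mu) = zee mu.
Proof.
move=> ltmuB sz_m; rewrite !(zee_prod (B := B)) ?all_mask // -!big_split /=.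
apply: eq_bigr => j _; rewrite -(count_mask_negb (pred1 (j : nat)) sz_m).
set a := count _ (mask m mu); set b := count _ (mask _ mu).
have := bin_fact (leq_addr b a); rewrite addKn => <-.
by rewrite expnD; ring.
Qed.

Lemma leq_size_sumn s : all (fun y => 0 < y) s -> size s <= sumn s.
Proof. by elim: s => //= y s IHs /andP[y_gt0 /IHs]; rewrite -add1n; apply: leq_add. Qed.

Lemma zee_gt0 s : all (fun y => 0 < y) s -> 0 < zee s.
Proof.
move=> /allP s_gt0; rewrite /zee big_seq prodn_cond_gt0 // => j; rewrite mem_undup => js.
by rewrite muln_gt0 fact_gt0 expn_gt0 s_gt0.
Qed.

Lemma eq_splitting (mu : seq nat) (m m' : bitseq) : sorted geq mu ->
  size m = size mu -> size m' = size mu ->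
  ((mask m mu, mask (map negb m) mu) == (mask m' mu, mask (map negb m') mu)) =
  perm_eq (mask m mu) (mask m' mu).
Proof.
move=> sorted_mu sz_m sz_m'.
have geq_trans : transitive geq by move=> y x z /= le_yx le_zy; apply: leq_trans le_zy le_yx.
have geq_anti : antisymmetric geq by move=> x y xy; apply/esym/anti_leq; move: xy; rewrite /= andbC.
have sorted_eq_mask b b' := sorted_eq geq_trans geq_anti (sorted_mask geq_trans b sorted_mu)
  (sorted_mask geq_trans b' sorted_mu).
apply/eqP/idP => [[-> _]|perm_m]; first exact: perm_refl.
have mask_eq := sorted_eq_mask _ _ perm_m; congr (_, _) => //; apply: sorted_eq_mask.
apply/permP => a; apply/eqP; rewrite -(eqn_add2l (count a (mask m mu))).
by rewrite count_mask_negb // mask_eq count_mask_negb.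
Qed.

Lemma count_splitting B (mu : seq nat) (t : (size mu).-tuple bool) :
  sorted geq mu -> all (fun y => y < B) mu ->
  count_mem (mask t mu, mask (map negb t) mu)
    [seq (mask (val m) mu, mask (map negb (val m)) mu) | m <- enum {: (size mu).-tuple bool}] =
  \prod_(j < B) 'C(count_mem (j : nat) mu, count_mem (j : nat) (mask t mu)).
Proof.
move=> sorted_mu ltmuB.
transitivity (count
  (fun m => (mask m mu, mask (map negb m) mu) == (mask t mu, mask (map negb t) mu))
  (map val (enum {: (size mu).-tuple bool}))); first by rewrite !count_map.
rewrite (permP (perm_bitseqs _)) -(count_perm_mask ltmuB (all_mask _ ltmuB)).
apply: eq_in_count => m; rewrite mem_bitseqs => /eqP sz_m.
by rewrite eq_sym (eq_splitting sorted_mu) ?size_tuple // perm_sym.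
Qed.

Local Open Scope ring_scope.

Section RisingFactorial.
Variable R : comPzRingType.

Definition rising (y : R) (k : nat) : R := \prod_(i < k) (y + i%:R).

Lemma rising0 y : rising y 0 = 1.
Proof. by rewrite /rising big_ord0. Qed.

Lemma risingS y k : rising y k.+1 = rising y k * (y + k%:R).
Proof. by rewrite /rising big_ord_recr. Qed.

Lemma risingSl y k : rising y k.+1 = y * rising (y + 1) k.
Proof.
rewrite /rising big_ord_recl addr0; congr (_ * _).
by apply: eq_bigr => i _; rewrite /= -nat1r addrA.
Qed.

Lemma fact_rising n k : (0 < n)%N ->
  ((n + k).-1)`!%:R = (n.-1)`!%:R * rising n%:R k.
Proof.
move=> n_gt0; elim: k => [|k IHk]; first by rewrite addn0 rising0 mulr1.
rewrite risingS mulrA -IHk addnS /= -{1}(prednK (leq_trans n_gt0 (leq_addr k n))).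
by rewrite factS natrM mulrC prednK ?addn_gt0 ?n_gt0 // natrD.
Qed.

End RisingFactorial.

Lemma cardsD1_succ (T : finType) (S : {set T}) j k :
  j \in S -> #|S| = k.+1 -> #|S :\ j| = k.
Proof. by move=> jS; rewrite (cardsD1 j) jS => -[]. Qed.

Section AbelConvolution.
Variables (R : comPzRingType) (I : finType) (x : I -> nat).

Definition wsum (S : {set I}) : R := (\sum_(i in S) x i)%N%:R.

Lemma wsumD1 (S : {set I}) j : j \in S -> wsum S = (x j)%:R + wsum (S :\ j).
Proof. by move=> jS; rewrite /wsum (big_setD1 j jS) natrD. Qed.

Lemma wsumE (S : {set I}) : wsum S = \sum_(i in S) (x i)%:R.
Proof. by rewrite /wsum natr_sum. Qed.

Definition abel (a : R) (S : {set I}) : R :=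
  if S == set0 then 1 else a * rising (a + wsum S + 1) #|S|.-1.

Lemma abel0 (S : {set I}) : abel 0 S = (S == set0)%:R.
Proof. by rewrite /abel; case: (S == set0); rewrite ?mul0r. Qed.

Lemma abel_set0 a : abel a set0 = 1.
Proof. by rewrite /abel eqxx. Qed.

Lemma abel_card0 a (S : {set I}) : #|S| = 0%N -> abel a S = 1.
Proof. by move/eqP; rewrite cards_eq0 => /eqP->; apply: abel_set0. Qed.

Lemma abel_card a (S : {set I}) k : #|S| = k.+1 ->
  abel a S = a * rising (a + wsum S + 1) k.
Proof. by move=> cardS; rewrite /abel -cards_eq0 cardS. Qed.

Lemma abel_diff b (E : {set I}) :
  abel (b + 1) E - abel b E = \sum_(j in E) abel (b + (x j)%:R + 1) (E :\ j).
Proof.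
have [->|E0] := eqVneq E set0; first by rewrite big_set0 !abel_set0 subrr.
case cardE: #|E| => [|k]; first by move/eqP: cardE; rewrite cards_eq0 (negPf E0).
rewrite !(abel_card _ cardE); case: k cardE => [|k] cardE.
  rewrite (eq_bigr (fun=> 1)) => [|j jE]; last by rewrite abel_card0 ?(cardsD1_succ jE cardE).
  by rewrite sumr_const cardE !rising0; ring.
have termE j : j \in E ->
    abel (b + (x j)%:R + 1) (E :\ j) = (b + (x j)%:R + 1) * rising (b + wsum E + 2%:R) k.
  move=> jE; rewrite (abel_card _ (cardsD1_succ jE cardE)) (wsumD1 jE).
  by congr (_ * rising _ _); ring.
rewrite (eq_bigr _ termE) -mulr_suml big_split big_split /= !sumr_const -wsumE cardE.
rewrite risingS risingSl.
have -> : b + 1 + wsum E + 1 = b + wsum E + 2%:R by ring.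
have -> : b + wsum E + 1 + 1 = b + wsum E + 2%:R by ring.
by rewrite -!natr1; ring.
Qed.

(* Induction on #|V| and, inside, on b, passing from b to b + 1 with abel_diff. *)
Lemma abel_convolution (V : {set I}) a (b : nat) :
  \sum_(S : {set I} | S \subset V) abel a S * abel b%:R (V :\: S) = abel (a + b%:R) V.
Proof.
elim: {V}_.+1 {-2}V (ltnSn #|V|) a b => // n IHn V ltVn a b.
elim: b => [|b IHb].
  rewrite addr0 (bigD1 V) //= setDv abel0 eqxx mulr1 big1 ?addr0 // => S /andP[SV neSV].
  have /negPf VnS : ~~ (V \subset S) by apply: contra neSV => VS; rewrite eqEsubset SV.
  by rewrite abel0 setD_eq0 VnS mulr0.
have abelS E : abel b.+1%:R E = abel b%:R E + \sum_(j in E) abel (b%:R + (x j)%:R + 1) (E :\ j).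
  by rewrite -abel_diff -natr1 [RHS]addrC subrK.
under eq_bigr => S _ do rewrite abelS mulrDr.
rewrite big_split /= IHb.
under eq_bigr => S _ do rewrite mulr_sumr.
rewrite (exchange_big_dep (fun j => j \in V)) /=; last by move=> S j _; rewrite inE => /andP[].
rewrite (eq_bigr (fun j => abel (a + b%:R + (x j)%:R + 1) (V :\ j))); last first.
  move=> j jV; have ltVjn : (#|V :\ j| < n)%N by rewrite (cardsD1 j V) jV in ltVn.
  have -> : a + b%:R + (x j)%:R + 1 = a + (b + x j).+1%:R by rewrite -natr1 natrD !addrA.
  rewrite -natrD natr1 -IHn //.
  apply: eq_big => [S|S _]; first by rewrite subsetD1 inE jV andbT.
  by rewrite setDDl setUC -setDDl.
by rewrite -abel_diff -natr1 [in RHS]addrA [LHS]addrC subrK.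
Qed.

Definition rising_weight (S : {set I}) : R :=
  if S == set0 then 0 else rising (wsum S) #|S|.-1.

Lemma rising_weight_rooted (S : {set I}) :
  rising_weight S = \sum_(r in S) abel (x r)%:R (S :\ r).
Proof.
rewrite /rising_weight; have [->|S0] := eqVneq S set0; first by rewrite big_set0.
case cardS: #|S| => [|k] /=; first by move/eqP: cardS; rewrite cards_eq0 (negPf S0).
case: k cardS => [|k] cardS.
  rewrite (eq_bigr (fun=> 1)) ?sumr_const ?cardS ?rising0 // => r rS.
  by rewrite abel_card0 ?(cardsD1_succ rS cardS).
under eq_bigr => r rS do rewrite (abel_card _ (cardsD1_succ rS cardS)) -wsumD1 //.
by rewrite -mulr_suml -wsumE risingSl.
Qed.

(* Root S at r and U :\: S at r', then sum over S :\ r with abel_convolution. *)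
Lemma rising_weight_pairs (U : {set I}) :
  \sum_(S : {set I} | S \subset U) rising_weight S * rising_weight (U :\: S) =
  \sum_(r in U) \sum_(r' in U :\ r) abel ((x r)%:R + (x r')%:R) (U :\ r :\ r').
Proof.
under eq_bigr => S _ do rewrite !rising_weight_rooted big_distrl /=.
under eq_bigr => S _ do under eq_bigr => r _ do rewrite big_distrr /=.
rewrite (exchange_big_dep (fun r => r \in U)) /=; last by move=> S r SU rS; apply: (subsetP SU).
apply: eq_bigr => r rU.
rewrite (exchange_big_dep (fun r' => r' \in U :\ r)) /=; last first.
  move=> S r' /andP[SU rS]; rewrite !inE => /andP[r'S ->]; rewrite andbT.
  by apply: contraNneq r'S => ->.
apply: eq_bigr => r'; rewrite !inE => /andP[r'r r'U].
rewrite (reindex_onto (fun S' => r |: S') (fun S => S :\ r)) /=; last first.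
  by move=> S /andP[/andP[_ rS] _]; rewrite setD1K.
rewrite -abel_convolution; apply: eq_big => S'.
  have -> : ((r |: S') :\ r == S') = (r \notin S').
    apply/eqP/idP => [<-|rS']; first by rewrite !inE eqxx.
    by apply/setP => i; rewrite !inE; case: eqP => // ->; rewrite (negPf rS').
  rewrite subUset sub1set rU setU11 !inE negb_or r'U r'r !subsetD1.
  by case: (S' \subset U); case: (r \in S'); case: (r' \in S').
move=> /andP[_ /eqP ->]; congr (_ * abel _ _).
by apply/setP => i; rewrite !inE; case: (i == r'); case: (i == r); case: (i \in S').
Qed.

Lemma sum_abel_pairs (U : {set I}) k : #|U| = k.+2 ->
  \sum_(r in U) \sum_(r' in U :\ r) abel ((x r)%:R + (x r')%:R) (U :\ r :\ r') =
  2%:R * k.+1%:R * rising (wsum U) k.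
Proof.
move=> cardU.
have cardUD1 r : r \in U -> #|U :\ r| = k.+1 by move/cardsD1_succ; apply.
have cardUD2 r r' : r \in U -> r' \in U :\ r -> #|U :\ r :\ r'| = k.
  by move=> rU /cardsD1_succ; apply; apply: cardUD1.
case: k cardU cardUD1 cardUD2 => [|k] cardU cardUD1 cardUD2.
  rewrite (eq_bigr (fun=> 1)) ?sumr_const ?cardU ?rising0 ?mulr1 // => r rU.
  rewrite (eq_bigr (fun=> 1)) ?sumr_const ?cardUD1 // => r' r'U.
  by rewrite abel_card0 ?cardUD2.
have pairE r r' : r \in U -> r' \in U :\ r ->
    abel ((x r)%:R + (x r')%:R) (U :\ r :\ r') = ((x r)%:R + (x r')%:R) * rising (wsum U + 1) k.
  move=> rU r'U; rewrite (abel_card _ (cardUD2 r r' rU r'U)).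
  by rewrite (wsumD1 rU) (wsumD1 r'U) !addrA.
have innerE r : r \in U -> \sum_(r' in U :\ r) ((x r)%:R + (x r')%:R) = k.+1%:R * (x r)%:R + wsum U.
  by move=> rU; rewrite big_split /= sumr_const cardUD1 // -wsumE (wsumD1 rU) -mulr_natr; ring.
under eq_bigr => r rU do rewrite (eq_bigr _ (fun r' => pairE r r' rU)) -mulr_suml innerE //.
rewrite -mulr_suml big_split /= -mulr_sumr -wsumE sumr_const cardU risingSl.
by rewrite -mulr_natr -[k.+3]addn2 -[k.+2]addn1 !natrD; ring.
Qed.

Lemma rising_weight_convolution :
  \sum_(S : {set I}) rising_weight S * rising_weight (~: S) =
  if (1 < #|I|)%N then 2%:R * #|I|.-1%:R * rising (wsum setT) (#|I| - 2) else 0.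
Proof.
have -> : \sum_(S : {set I}) rising_weight S * rising_weight (~: S) =
    \sum_(S : {set I} | S \subset setT) rising_weight S * rising_weight (setT :\: S).
  by apply: eq_big => S; rewrite ?subsetT // setTD.
rewrite rising_weight_pairs -cardsT; case: ltnP => [|leU1].
  by case cardU: #|_| => [|[|k]] // _; rewrite (sum_abel_pairs cardU) subn2.
apply: big1 => r rU; apply: big1 => r' r'U.
by move: leU1; rewrite (cardsD1 r) rU (cardsD1 r') r'U.
Qed.

End AbelConvolution.

Arguments wsum {R I} x S.
Arguments rising_weight {R I} x S.

Lemma sum_undup (R : numFieldType) (T : eqType) (F : T -> R) (s : seq T) :
  \sum_(y <- undup s) F y = \sum_(y <- s) F y / (count_mem y s)%:R.
Proof.
rewrite -[in RHS]big_undup_iterop_count; apply: eq_big_seq => y; rewrite mem_undup => ys.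
rewrite Monoid.iteropE iter_addr_0 -[(F y / _) *+ _]mulr_natr divfK //.
by rewrite pnatr_eq0 -lt0n -has_count has_pred1.
Qed.

Definition rising_sumn (s : seq nat) : rat :=
  if (0 < size s)%N then rising (sumn s)%:R (size s).-1 else 0.

Lemma base_seriesE s : all (fun y => 0 < y)%N s ->
  base_series s = rising_sumn s / (zee s)%:R.
Proof.
move=> s_gt0; rewrite /base_series /rising_sumn.
case: (size s) (leq_size_sumn s_gt0) => [|k] le_k_sumn /=; first by rewrite mul0r.
have sumn_gt0 : (0 < sumn s)%N by apply: leq_trans le_k_sumn.
rewrite addnS subn2 /= fact_rising // natrM invfM mulrACA mulfV ?mul1r //.
by rewrite pnatr_eq0 -lt0n fact_gt0.
Qed.

Lemma lhs_seriesE s : all (fun y => 0 < y)%N s ->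
  lhs_series s = 2^-1 * (if (1 < size s)%N
    then 2%:R * (size s).-1%:R * rising (sumn s)%:R (size s - 2) else 0) / (zee s)%:R.
Proof.
move=> s_gt0; rewrite /lhs_series; case: ltnP => [|_]; last by rewrite mulr0 mul0r.
case: (size s) (leq_size_sumn s_gt0) => [|[|k]] // le_k_sumn _.
have sumn_gt0 : (0 < sumn s)%N by apply: leq_trans le_k_sumn.
rewrite !addnS subSS !subn2 /= natrM fact_rising // !natrM.
have fact_neq0 : ((sumn s).-1)`!%:R != 0 :> rat by rewrite pnatr_eq0 -lt0n fact_gt0.
have zee_neq0 : (zee s)%:R != 0 :> rat by rewrite pnatr_eq0 -lt0n zee_gt0.
by field; rewrite fact_neq0 zee_neq0.
Qed.

Lemma rising_sumn_mask (mu : seq nat) (m : bitseq) (S : {set 'I_(size mu)}) :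
  (forall i : 'I_(size mu), nth false m i = (i \in S)) ->
  rising_sumn (mask m mu) = rising_weight (fun i : 'I_(size mu) => nth 0 mu i) S.
Proof.
move=> mS.
have sumnE : sumn (mask m mu) = (\sum_(i in S) nth 0 mu i)%N.
  by rewrite sumnE big_mask; apply: eq_big => i; rewrite ?andbT ?mS // (tnth_nth 0).
have sizeE : size (mask m mu) = #|S|.
  by rewrite -sum1_size big_mask -sum1_card; apply: eq_bigl => i; rewrite andbT mS.
by rewrite /rising_sumn /rising_weight /wsum sizeE sumnE card_gt0; case: eqP.
Qed.

Lemma sum_tuples_sets (mu : seq nat) :
  \sum_(t : (size mu).-tuple bool) rising_sumn (mask t mu) * rising_sumn (mask (map negb t) mu) =
  \sum_(S : {set 'I_(size mu)}) rising_weight (fun i : 'I_(size mu) => nth 0 mu i) S *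
                                rising_weight (fun i : 'I_(size mu) => nth 0 mu i) (~: S).
Proof.
pose tuple_of (S : {set 'I_(size mu)}) := [tuple i \in S | i < size mu].
rewrite (reindex tuple_of); last first.
  exists (fun t : (size mu).-tuple bool => [set i | tnth t i]) => [S _|t _].
    by apply/setP => i; rewrite inE tnth_mktuple.
  by apply: eq_from_tnth => i; rewrite tnth_mktuple inE.
apply: eq_bigr => S _; rewrite (rising_sumn_mask (S := S)) ?(rising_sumn_mask (S := ~: S)) // => i.
  by rewrite (nth_map false) ?size_tuple // nth_mktuple inE.
by rewrite nth_mktuple.
Qed.

Lemma fps_mul_base_series (mu : seq nat) : is_partition mu ->
  fps_mul base_series base_series mu =
  (\sum_(t : (size mu).-tuple bool) rising_sumn (mask t mu) * rising_sumn (mask (map negb t) mu))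
    / (zee mu)%:R.
Proof.
move=> /andP[sorted_mu mu_gt0].
have lt_mu_B : all (fun y => y < (sumn mu).+1)%N mu.
  by apply/allP => y y_mu; rewrite ltnS sumnE (big_rem y) ?leq_addr.
rewrite /fps_mul /splittings sum_undup big_map big_enum /= mulr_suml; apply: eq_bigr => t _.
rewrite (count_splitting _ sorted_mu lt_mu_B) !base_seriesE ?all_mask //.
have zee_mu := zee_mask_split (m := t) lt_mu_B (size_tuple t).
have nz k : (0 < k)%N -> k%:R != 0 :> rat by move=> k_gt0; rewrite pnatr_eq0 -lt0n.
have C_gt0 :
    (0 < \prod_(j < (sumn mu).+1) 'C(count_mem (j : nat) mu, count_mem (j : nat) (mask t mu)))%N.
  by move: (zee_gt0 mu_gt0); rewrite -zee_mu !muln_gt0 => /andP[/andP[]].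
by rewrite -zee_mu !natrM; field; rewrite !nz ?zee_gt0 ?all_mask.
Qed.

Theorem propositionA3 :
  forall mu : seq nat, is_partition mu ->
    lhs_series mu = 2^-1 * fps_mul base_series base_series mu.
Proof.
move=> mu mu_part; have /andP[_ mu_gt0] := mu_part.
rewrite lhs_seriesE // fps_mul_base_series // sum_tuples_sets rising_weight_convolution.
have -> : wsum (fun i : 'I_(size mu) => nth 0 mu i) setT = (sumn mu)%:R :> rat.
  by rewrite /wsum sumnE (big_nth 0) big_mkord; congr _%:R; apply: eq_bigl => i; rewrite inE.
by rewrite card_ord mulrA.
Qed.
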